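(* Let $C,C'',C'$ be three columns of the diagram of a composition of $n$, all of the same height $s$, with $C$ to the left of $C''$ and $C''$ to the left of $C'$, and such that $C''$ is the only column of height $s$ lying strictly between $C$ and $C'$ (so $(C,C'')$ and $(C'',C')$ are pairs of neighbouring columns). Then there is a non-zero scalar $\lambda\in\mathbb C$ such that $$f_{C,C'}=\lambda\, f_{C,C''}\, f_{C'',C'}$$ as polynomial functions on $\mathfrak m$.
   Context: Let $n\ge 2$ and $G=SL(n,\mathbb C)$. Let $B$ be the upper triangular matrices in $G$, $H$ the diagonal ones, $\mathfrak h=\mathrm{Lie}(H)$ and $\mathfrak n$ the strictly upper triangular matrices. Write $x_{i,j}$ for the matrix unit with $1$ in position $(i,j)$. A composition $(c_1,\dots,c_k)$ of $n$ (positive integers with sum $n$) determines the standard parabolic subgroup $P\supseteq B$ of block upper triangular matrices with diagonal blocks of sizes $c_1,\dots,c_k$. Let $\mathfrak m$ be the Lie algebra of the unipotent radical of $P$, i.e. the span of the $x_{i,j}$ with $i<j$ lying in different diagonal blocks. Let $P'$ be the derived group of $P$, acting on $\mathfrak m$ by the adjoint action. Diagram and tableau: the composition is represented by columns $C_1,\dots,C_k$ from left to right, where $C_i$ consists of $c_i$ boxes placed in rows $R_1,\dots,R_{c_i}$ (rows numbered from top to bottom). The boxes are filled with $1,\dots,n$ so that $C_i$ contains $c_1+\dots+c_{i-1}+1,\dots,c_1+\dots+c_i$, increasing downwards. The height of $C_i$ is $c_i$. Two columns of the same height $s$ are called neighbouring if no column of height $s$ lies strictly between them. The function $f_{C,C'}$: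 for two columns $C$ (left) and $C'$ (right) of the same height $s$, let $J$ be the interval of integers from the smallest entry of $C$ to the largest entry of $C'$, and $N=|J|$. For $X\in\mathfrak m$ let $X_J$ be the $N\times N$ principal submatrix of $X$ with rows and columns indexed by $J$. For an indeterminate $a$, let $M_{C,C'}(X,a)$ be the determinant of the $(N-s)\times(N-s)$ submatrix of $X_J+a\,\mathrm{Id}_N$ formed by its first $N-s$ rows and its last $N-s$ columns. Let $d$ be the number of boxes lying strictly below row $R_s$ in the columns strictly between $C$ and $C'$. Then $M_{C,C'}(X,a)$ is divisible by $a^{d}$ as a polynomial in $a$, and $f_{C,C'}(X)$ is defined as the value at $a=0$ of $a^{-d}M_{C,C'}(X,a)$ (the Benlolo–Sanderson invariant of the pair $C,C'$ when $C,C'$ are neighbouring). *)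

(* The complex numbers are modelled as R[i] = complex R
   for an arbitrary R : realType (a complete archimedean ordered field,
   i.e. a model of the real numbers). *)
From HB Require Import structures.
From mathcomp Require Import all_boot all_order all_algebra.
From mathcomp Require Import reals complex.
Set Implicit Arguments. Unset Strict Implicit. Unset Printing Implicit Defensive.
Import Order.TTheory GRing.Theory Num.Theory.
Local Open Scope ring_scope.

Definition composition (n : nat) (c : seq nat) : Prop :=
  all (fun x => 0 < x)%N c /\ sumn c = n.

(* psum c l = c_1 + ... + c_l (0-based: sum of the first l parts). *)
Definition psum (c : seq nat) (l : nat) : nat := sumn (take l c).

(* 0-based block (column) index of the 0-based matrix index t:
   the unique l with psum c l <= t < psum c l.+1. *)
Definition blk (c : seq nat) (t : nat) : nat :=
  count (fun l => psum c l.+1 <= t)%N (iota 0 (size c)).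

(* The nilradical m: span of x_{i,j}, i<j in different diagonal blocks. *)
Definition nilrad (R : nzRingType) (n : nat) (c : seq nat) : pred 'M[R]_n :=
  fun X => [forall i : 'I_n, forall j : 'I_n,
             (X i j != 0) ==> ((i < j)%N && (blk c i != blk c j))].

(* Entry of a matrix addressed by natural numbers (0 outside the range). *)
Definition mxn (R : nzRingType) (n : nat) (X : 'M[R]_n) (r t : nat) : R :=
  match insub r, insub t with
  | Some i, Some j => X i j
  | _, _ => 0
  end.

(* The polynomial M_{C,C'}(X, a) for columns with 0-based indices i < k:
   J = [a0, a0 + N - 1] (0-based), rows 0..N-s-1 and columns s..N-1 of
   X_J + a Id_N. *)
Definition Mpoly (R : nzRingType) (n : nat) (c : seq nat) (i k : nat)
    (X : 'M[R]_n) : {poly R} :=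
  let s := nth 0%N c i in
  let a0 := psum c i in
  let N := (psum c k.+1 - a0)%N in
  \det (\matrix_(r < N - s, t < N - s)
          ((mxn X (a0 + r) (a0 + s + t))%:P
           + (if r == (s + t)%N :> nat then 'X else 0))).

(* d = number of boxes strictly below row R_s in columns strictly between. *)
Definition dboxes (c : seq nat) (i k : nat) : nat :=
  (\sum_(i.+1 <= l < k) (nth 0 c l - nth 0 c i))%N.

(* f_{C,C'}(X) = value at a = 0 of a^{-d} M_{C,C'}(X,a), i.e. the value at 0
   of the quotient of M by X^d (equivalently the d-th coefficient of M). *)
Definition fCC (R : fieldType) (n : nat) (c : seq nat) (i k : nat)
    (X : 'M[R]_n) : R :=
  ((Mpoly c i k X) %/ 'X^(dboxes c i k)).[0].

From HB Require Import structures.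
From mathcomp Require Import all_boot all_order all_algebra.
From mathcomp Require Import reals complex.
From mathcomp Require Import perm zify.
Import Order.TTheory GRing.Theory Num.Theory.
Set Implicit Arguments. Unset Strict Implicit. Unset Printing Implicit Defensive.
Local Open Scope ring_scope.

(* For three columns i1 < i2 < i3 of the same height s we prove
   f_{i1,i3} = f_{i1,i2} * f_{i2,i3}, i.e. the scalar is lambda = 1.  M_{i,k}(X, a) is the determinant of the m x m matrix Amx with
   entries X_{a0+r, a0+s+t} + a [r = s+t], and f_{i,k} is its a^d
   coefficient, d = dboxes c i k (fCC_coef).
   1. Leibniz expansion (coef_det_shape): the a^j coefficient is a signed sum
      over the permutations p with exactly j positions r = s + p r on the
      "shifted diagonal" of the products of the X-entries at the others.
   2. Only "supported" permutations, whose off-diagonal entries are all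
      nonzero, contribute.  For X in the nilradical these entries lie right
      of their row's block, so at most s rows of a block leave it
      (card_cross): each block l strictly between i and k has at least
      c_l - s diagonal rows.  Hence a supported permutation has at least d
      diagonal positions and the a^j coefficients, j < d, vanish (low_coef).
   3. For i1 < i2 < i3, a supported permutation with exactly d diagonal
      positions has none in block i2, which forces it to map the rows of
      blocks i1 .. i2-1 into the same columns (supported_preserves).  So the
      a^d coefficient does not change when the lower-left block is zeroed
      (coef_truncate); the resulting determinant is M_{i1,i2} M_{i2,i3}
      (det_K0), whose a^{d1+d2} coefficient is f_{i1,i2} f_{i2,i3} by 2. *)

Lemma psum_mono (c : seq nat) (a b : nat) : (a <= b)%N -> (psum c a <= psum c b)%N.
Proof. by move=> le_ab; rewrite /psum -(subnKC le_ab) takeD sumn_cat leq_addr. Qed.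

Lemma psumS (c : seq nat) (l : nat) :
  (l < size c)%N -> psum c l.+1 = (psum c l + nth 0%N c l)%N.
Proof. by move=> lt_l; rewrite /psum (take_nth 0%N lt_l) -cats1 sumn_cat /= addn0. Qed.

Lemma blk_psum (c : seq nat) (g l : nat) : (l < size c)%N ->
  (psum c l <= g < psum c l.+1)%N -> blk c g = l.
Proof.
move=> lt_l /andP [lo_g g_hi]; rewrite /blk -(subnKC (ltnW lt_l)) iotaD count_cat.
rewrite (@eq_in_count _ _ predT); last first.
  move=> l' /=; rewrite mem_iota => /andP [_ lt_l'].
  by rewrite (leq_trans (psum_mono c lt_l') lo_g).
rewrite count_predT size_iota (@eq_in_count _ _ pred0) ?count_pred0 ?addn0 //.
move=> l' /=; rewrite mem_iota => /andP [le_l' _]; apply/negbTE; rewrite -ltnNge.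
by rewrite (leq_trans g_hi) // psum_mono.
Qed.

Lemma card_ord_range (m lo hi : nat) :
  #|[pred r : 'I_m | (lo <= r < hi)%N]| = (minn hi m - minn lo m)%N.
Proof.
rewrite -sum1_card (eq_bigl (fun r : 'I_m => lo <= r < hi)%N) //.
rewrite -(big_mkord (fun r => lo <= r < hi)%N (fun _ => 1%N)) sum1_count.
rewrite /index_iota subn0.
elim: m => [|m IHm]; first by rewrite !minn0.
rewrite -addn1 iotaD count_cat IHm /= add0n addn0.
by case: (leqP lo m); case: (ltnP m hi) => /=; lia.
Qed.

Lemma card_perm_preim (T : finType) (p : {perm T}) (P : pred T) :
  #|[pred x | P (p x)]| = #|P|.
Proof.
have := card_preimset [set x | P x] (@perm_inj _ p).
rewrite [in RHS]cardsE => <-; rewrite -cardsE.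
by apply: eq_card => x; rewrite !inE.
Qed.

(* A permutation mapping a set into itself maps it onto itself, and hence
   also maps its complement into the complement. *)
Lemma perm_stable (T : finType) (p : {perm T}) (A : pred T) :
  {subset A <= [pred x | A (p x)]} -> forall x, A (p x) = A x.
Proof.
move=> sub_A x; have /subset_cardP eqA := esym (card_perm_preim p A).
by have /eqA/(_ x) := introT subsetP sub_A; rewrite !inE.
Qed.

(* The fibres of g over l = a, ..., b-1, restricted to P, are disjoint, so
   their sizes add up to at most #|P|. *)
Lemma sum_card_fibres (T : finType) (P : pred T) (g : T -> nat) (a b : nat) :
  (\sum_(a <= l < b) #|[pred x | P x && (g x == l)]| <= #|P|)%N.
Proof.
rewrite (eq_bigr (fun l => \sum_(x | P x) (g x == l : nat))); last first.
  move=> l _; rewrite -sum1_card (eq_bigl (fun x => P x && (g x == l))) //.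
  by rewrite big_mkcondr; apply: eq_bigr => x _; case: eqP.
rewrite exchange_big /= -sum1_card; apply: leq_sum => x _.
have -> : (\sum_(a <= l < b) (g x == l : nat) = count (pred1 (g x)) (index_iota a b))%N.
  rewrite -sum1_count [RHS]big_mkcond; apply: eq_bigr => l _ /=.
  by rewrite eq_sym; case: eqP.
by rewrite (count_uniq_mem (g x) (iota_uniq _ _)) leq_b1.
Qed.

Lemma nilrad_mxn (R : nzRingType) (n : nat) (c : seq nat) (X : 'M[R]_n) (g h : nat) :
  X \in nilrad c -> mxn X g h != 0 -> (g < h)%N && (blk c g != blk c h).
Proof.
move=> /forallP X_nil; rewrite /mxn.
case: (insubP 'I_n g) => [i _ <-|_]; case: (insubP 'I_n h) => [j _ <-|_];
  rewrite ?eqxx //.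
exact: (implyP (forallP (X_nil i) j)).
Qed.

Lemma nilrad_mxn_diag (R : nzRingType) (n : nat) (c : seq nat) (X : 'M[R]_n) (g : nat) :
  X \in nilrad c -> mxn X g g = 0.
Proof. by move=> X_nil; apply/eqP/negPn/negP => /(nilrad_mxn X_nil); rewrite ltnn. Qed.

Definition Amx (R : nzRingType) (n : nat) (X : 'M[R]_n) (m a0 s : nat) : 'M[{poly R}]_m :=
  \matrix_(r < m, t < m) ((mxn X (a0 + r) (a0 + s + t))%:P
                           + (if r == (s + t)%N :> nat then 'X else 0)).

Lemma Mpoly_Amx (R : nzRingType) (n : nat) (c : seq nat) (i k : nat) (X : 'M[R]_n) :
  Mpoly c i k X =
  \det (Amx X (psum c k.+1 - psum c i - nth 0%N c i) (psum c i) (nth 0%N c i)).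
Proof. by []. Qed.

Definition on_adiag (s m : nat) (r t : 'I_m) : bool := (val r == s + val t)%N.

Lemma Amx_shape (R : nzRingType) (n : nat) (c : seq nat) (X : 'M[R]_n) :
  X \in nilrad c -> forall (m a0 s : nat) (r t : 'I_m),
  Amx X m a0 s r t = if on_adiag s r t then 'X else (mxn X (a0 + r) (a0 + s + t))%:P.
Proof.
move=> X_nil m a0 s r t; rewrite mxE /on_adiag; case: eqP => [->|_]; last by rewrite addr0.
by rewrite addnA (nilrad_mxn_diag _ X_nil) add0r.
Qed.

Lemma coef_det_shape (R : comNzRingType) (m : nat) (A : 'M[{poly R}]_m)
    (F : 'I_m -> 'I_m -> bool) (x : 'I_m -> 'I_m -> R) :
  (forall r t, A r t = if F r t then 'X else (x r t)%:P) -> forall j : nat,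
  (\det A)`_j = \sum_(p : 'S_m) (-1) ^+ p *
     ((#|[pred r | F r (p r)]| == j)%:R * \prod_(r | ~~ F r (p r)) x r (p r)).
Proof.
move=> A_shape j; rewrite /determinant coef_sum; apply: eq_bigr => p _.
have -> : \prod_r A r (p r) =
    (\prod_(r | ~~ F r (p r)) x r (p r))%:P * 'X^#|[pred r | F r (p r)]|.
  rewrite (bigID (fun r => F r (p r))) /= mulrC; congr (_ * _).
    by rewrite rmorph_prod; apply: eq_bigr => r /negbTE Fr; rewrite A_shape Fr.
  by rewrite (eq_bigr (fun _ => 'X)) ?prodr_const // => r Fr; rewrite A_shape Fr.
by case: (odd_perm p); rewrite ?expr1 ?expr0 ?mulN1r ?mul1r ?coefN coefCM coefXn eq_sym mulrC.
Qed.

(* A permutation contributes to the expansion of det (Amx X m a0 s) only if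
   all its entries off the shifted diagonal are nonzero. *)
Definition supported (R : nzRingType) (n : nat) (X : 'M[R]_n) (a0 s m : nat)
    (p : 'S_m) : Prop :=
  forall r, ~~ on_adiag s r (p r) -> mxn X (a0 + r) (a0 + s + p r) != 0.

Lemma supported_of_prod (R : comNzRingType) (n : nat) (X : 'M[R]_n) (a0 s m : nat)
    (p : 'S_m) :
  \prod_(r | ~~ on_adiag s r (p r)) mxn X (a0 + r) (a0 + s + p r) != 0 ->
  supported X a0 s p.
Proof.
move=> nz_prod r r_off; apply: contraNneq nz_prod => eq0.
by rewrite (bigD1 r) //= eq0 mul0r.
Qed.

Lemma card_cross (m s : nat) (p : 'S_m) (q : nat) :
  (forall r : 'I_m, r <= s + p r)%N ->
  (#|[pred r : 'I_m | (r < q)%N && (q <= s + p r)%N]| <= s)%N.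
Proof.
move=> row_le; have := cardID [pred r | s + p r < q]%N [pred r : 'I_m | r < q]%N.
have -> : #|[predI [pred r : 'I_m | r < q] & [pred r | s + p r < q]]%N| =
          #|[pred r | (fun t : 'I_m => s + t < q)%N (p r)]|.
  by apply: eq_card => r; rewrite !inE /=; have := row_le r; lia.
have -> : #|[predD [pred r : 'I_m | r < q] & [pred r | s + p r < q]]%N| =
          #|[pred r : 'I_m | (r < q)%N && (q <= s + p r)%N]|.
  by apply: eq_card => r; rewrite !inE /= -leqNgt andbC.
rewrite (card_perm_preim p (fun t : 'I_m => s + t < q)%N).
have -> : #|(fun t : 'I_m => s + t < q)%N| = #|[pred t : 'I_m | 0 <= t < q - s]%N|.
  by apply: eq_card => t; rewrite !inE /=; lia.
have -> : #|[pred r : 'I_m | r < q]%N| = #|[pred r : 'I_m | 0 <= r < q]%N| by [].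
rewrite !card_ord_range; lia.
Qed.

Lemma card_blk_rows (m : nat) (c : seq nat) (a0 l : nat) : (l < size c)%N ->
  (a0 <= psum c l)%N -> (psum c l.+1 <= a0 + m)%N ->
  #|[pred r : 'I_m | (psum c l <= a0 + r < psum c l.+1)%N]| = nth 0%N c l.
Proof.
move=> lt_l lo hi; have := psumS lt_l.
rewrite (eq_card (B := [pred r : 'I_m | psum c l - a0 <= r < psum c l.+1 - a0]%N)).
  by rewrite card_ord_range; lia.
by move=> r; rewrite !inE /=; lia.
Qed.

Section DiagonalRows.
Variables (c : seq nat) (a0 s m : nat) (p : 'S_m).

Definition diag_in_blk (l : nat) : nat :=
  #|[pred r : 'I_m | on_adiag s r (p r) && (psum c l <= a0 + r < psum c l.+1)%N]|.

(* Diagonal rows of different blocks are different rows, so the diagonal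
   rows of the blocks strictly between i and k are at most all of them. *)
Lemma sum_diag_in_blk_le (i k : nat) : (k < size c)%N ->
  (\sum_(i.+1 <= l < k) diag_in_blk l <= #|[pred r : 'I_m | on_adiag s r (p r)]|)%N.
Proof.
move=> lt_k; apply: leq_trans (sum_card_fibres _ (fun r : 'I_m => blk c (a0 + r)) i.+1 k).
rewrite big_nat_cond [X in (_ <= X)%N]big_nat_cond.
apply: leq_sum => l /andP [/andP [lo_l l_hi] _].
apply: subset_leq_card; apply/subsetP => r; rewrite !inE /= => /andP [-> r_blk] /=.
by rewrite (blk_psum _ r_blk) //; lia.
Qed.

End DiagonalRows.

Section SupportedPermutations.
Variables (R : nzRingType) (n : nat) (c : seq nat) (X : 'M[R]_n).
Hypothesis X_nil : X \in nilrad c.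
Variables (a0 s m : nat) (p : 'S_m).
Hypothesis p_supp : supported X a0 s p.
Local Notation diag_in_blk := (diag_in_blk c a0 s p).

Lemma supported_row_le (r : 'I_m) : (r <= s + p r)%N.
Proof.
have [/eqP -> //|r_off] := boolP (on_adiag s r (p r)).
by have /(nilrad_mxn X_nil)/andP[] := p_supp r_off; lia.
Qed.

(* A row of block l off the shifted diagonal goes to a column beyond the end
   of block l, so it crosses the vertical line at the end of block l. *)
Lemma supported_leave_blk (l : nat) (r : 'I_m) : (l < size c)%N ->
  (psum c l <= a0 + r < psum c l.+1)%N -> ~~ on_adiag s r (p r) ->
  (r < psum c l.+1 - a0)%N && (psum c l.+1 - a0 <= s + p r)%N.
Proof.
move=> lt_l r_blk r_off.
have /(nilrad_mxn X_nil)/andP [lt_rt] := p_supp r_off.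
rewrite (blk_psum lt_l r_blk); case: (ltnP (a0 + s + p r) (psum c l.+1)) => [t_in|t_out].
  by rewrite (@blk_psum _ _ l) ?eqxx //; lia.
by move=> _; apply/andP; split; lia.
Qed.

(* Since at most s rows of block l leave it, at least c_l - s of them stay
   on the shifted diagonal. *)
Lemma diag_in_blk_lb (l : nat) : (l < size c)%N ->
  (a0 <= psum c l)%N -> (psum c l.+1 <= a0 + m)%N -> (nth 0%N c l - s <= diag_in_blk l)%N.
Proof.
move=> lt_l lo hi; set I := [pred r : 'I_m | (psum c l <= a0 + r < psum c l.+1)%N].
have := cardID (fun r => on_adiag s r (p r)) I; rewrite card_blk_rows //.
have -> : #|[predI I & fun r => on_adiag s r (p r)]| = diag_in_blk l.
  by apply: eq_card => r; rewrite !inE andbC.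
have : (#|[predD I & fun r => on_adiag s r (p r)]| <= s)%N.
  apply: leq_trans (card_cross (psum c l.+1 - a0) supported_row_le).
  apply: subset_leq_card; apply/subsetP => r; rewrite !inE /= => /andP [r_off r_blk].
  exact: supported_leave_blk.
by move=> le_D <-; apply: leq_trans (leq_sub2l _ le_D) _; rewrite addnK.
Qed.

Variables (i k : nat).
Hypotheses (lt_k : (k < size c)%N) (a0E : a0 = psum c i) (a0mE : (a0 + m)%N = psum c k).

Lemma sum_diag_in_blk_ge (a b : nat) : (i < a)%N -> (b <= k)%N ->
  (\sum_(a <= l < b) (nth 0%N c l - s) <= \sum_(a <= l < b) diag_in_blk l)%N.
Proof.
move=> lt_ia le_bk; rewrite big_nat_cond [X in (_ <= X)%N]big_nat_cond.
apply: leq_sum => l /andP [/andP [lo_l l_hi] _].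
apply: diag_in_blk_lb; first lia.
  by rewrite a0E psum_mono //; lia.
by rewrite a0mE psum_mono //; lia.
Qed.

Lemma dboxes_le_diag : s = nth 0%N c i ->
  (dboxes c i k <= #|[pred r : 'I_m | on_adiag s r (p r)]|)%N.
Proof.
move=> sE; apply: leq_trans (@sum_diag_in_blk_le c a0 s m p i k lt_k).
by rewrite /dboxes -sE; apply: sum_diag_in_blk_ge.
Qed.

End SupportedPermutations.

(* The coefficients of a^j, j < d, of M_{C,C'} vanish, so that f_{C,C'} is
   the a^d-coefficient.  (Here m = psum c k - psum c i is the size of the
   matrix once C and C' have the same height.) *)
Lemma low_coef (R : comNzRingType) (n : nat) (c : seq nat) (X : 'M[R]_n) (i k j : nat) :
  X \in nilrad c -> (k < size c)%N -> (i <= k)%N -> (j < dboxes c i k)%N ->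
  (\det (Amx X (psum c k - psum c i) (psum c i) (nth 0%N c i)))`_j = 0.
Proof.
move=> X_nil lt_k le_ik lt_j; rewrite (coef_det_shape (Amx_shape X_nil _ _)).
apply: big1 => p _; case: eqP => [diagE|_]; last by rewrite mul0r mulr0.
have [->|/supported_of_prod p_supp] := eqVneq (\prod_(r | ~~ on_adiag (nth 0%N c i) r (p r))
   mxn X (psum c i + r) (psum c i + nth 0%N c i + p r)) 0; first by rewrite !mulr0.
have := dboxes_le_diag X_nil p_supp lt_k (erefl _) _ (erefl _).
by rewrite diagE; have := psum_mono c le_ik; lia.
Qed.

Lemma perm_cross_segment (m m1 : nat) (p : 'S_m) :
  [exists r : 'I_m, (r < m1)%N && (m1 <= p r)%N] =
  [exists r : 'I_m, (m1 <= r)%N && (p r < m1)%N].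
Proof.
apply/idP/idP => /existsP [r0 /andP [r0_in pr0_out]]; apply: contraT => /existsPn stay.
  have sub_hi : {subset [pred x : 'I_m | m1 <= x]%N <= [pred x | m1 <= p x]%N}.
    by move=> x; rewrite !inE => x_hi; have := stay x; rewrite x_hi /= -leqNgt.
  have stable : (m1 <= p r0)%N = (m1 <= r0)%N := perm_stable sub_hi r0.
  by rewrite pr0_out leqNgt r0_in in stable.
have sub_lo : {subset [pred x : 'I_m | x < m1]%N <= [pred x | p x < m1]%N}.
  by move=> x; rewrite !inE => x_lo; have := stay x; rewrite x_lo /= -ltnNge.
have stable : (p r0 < m1)%N = (r0 < m1)%N := perm_stable sub_lo r0.
by rewrite pr0_out ltnNge r0_in in stable.
Qed.

Lemma coefM_lowest (R : nzRingType) (P Q : {poly R}) (d1 d2 : nat) :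
  (forall j, (j < d1)%N -> P`_j = 0) -> (forall j, (j < d2)%N -> Q`_j = 0) ->
  (P * Q)`_(d1 + d2) = P`_d1 * Q`_d2.
Proof.
move=> P_low Q_low; have lt_d1 : (d1 < (d1 + d2).+1)%N by rewrite ltnS leq_addr.
rewrite coefM (bigD1 (Ordinal lt_d1)) //= addKn big1 ?addr0 // => j /eqP neq_j.
have [lt_j|gt_j|eq_j] := ltngtP j d1; first by rewrite P_low ?mul0r.
  by rewrite Q_low ?mulr0 //; have := ltn_ord j; lia.
by case: neq_j; apply: val_inj.
Qed.

Definition lower_left (m1 m : nat) (r t : 'I_m) : bool := (m1 <= r)%N && (t < m1)%N.

Section ThreeColumns.
Variables (R : comNzRingType) (n : nat) (c : seq nat) (X : 'M[R]_n).
Hypothesis X_nil : X \in nilrad c.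
Variables (i1 i2 i3 : nat).
Hypotheses (lt12 : (i1 < i2)%N) (lt23 : (i2 < i3)%N) (lt3 : (i3 < size c)%N).
Hypotheses (s2E : nth 0%N c i2 = nth 0%N c i1) (s3E : nth 0%N c i3 = nth 0%N c i1).

Let s := nth 0%N c i1.
Let a0 := psum c i1.
Let m1 := (psum c i2 - psum c i1)%N.
Let m2 := (psum c i3 - psum c i2)%N.

Lemma psum_i2 : psum c i2 = (a0 + m1)%N.
Proof. by have := psum_mono c (ltnW lt12); rewrite /a0 /m1; lia. Qed.

Lemma psum_i3 : psum c i3 = (a0 + (m1 + m2))%N.
Proof.
by have := psum_mono c (ltnW lt12); have := psum_mono c (ltnW lt23); rewrite /a0 /m1 /m2; lia.
Qed.

(* The boxes between i1 and i3 are those between i1 and i2 together with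
   those between i2 and i3; column i2 itself contributes c_{i2} - s = 0. *)
Lemma dboxes_split : dboxes c i1 i3 = (dboxes c i1 i2 + dboxes c i2 i3)%N.
Proof.
rewrite /dboxes s2E (big_cat_nat _ (n := i2)) ?(ltnW lt23) //=.
by rewrite (big_ltn lt23) s2E subnn.
Qed.

(* A supported permutation with exactly d diagonal positions has no diagonal
   position in the rows of block i2: all the inequalities of dboxes_le_diag are equalities,
   and the one for block i2 reads 0 <= diag_in_blk i2. *)
Lemma no_diag_in_middle (p : 'S_(m1 + m2)) : supported X a0 s p ->
  #|[pred r | on_adiag s r (p r)]| = dboxes c i1 i3 -> diag_in_blk c a0 s p i2 = 0%N.
Proof.
move=> p_supp diagE; have endE := esym psum_i3.
have split3 g : (\sum_(i1.+1 <= l < i3) g l =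
    \sum_(i1.+1 <= l < i2) g l + (g i2 + \sum_(i2.+1 <= l < i3) g l))%N.
  by rewrite (big_cat_nat _ (n := i2)) ?(ltnW lt23) // (big_ltn lt23).
have := @sum_diag_in_blk_le c a0 s _ p i1 i3 lt3; rewrite diagE /dboxes !split3 s2E subnn.
have := sum_diag_in_blk_ge X_nil p_supp lt3 (erefl a0) endE (ltnSn i1) (ltnW lt23).
have := sum_diag_in_blk_ge X_nil p_supp lt3 (erefl a0) endE (ltn_trans lt12 (ltnSn i2)) (leqnn i3).
rewrite -/s; set A := \sum_(_ <= _ < i2) _; set B := \sum_(_ <= _ < i3) _.
set C := \sum_(_ <= _ < i2) _; set D := \sum_(_ <= _ < i3) _; lia.
Qed.

(* Hence such a permutation maps the rows of the blocks i1 .. i2-1 to the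
   columns of the same blocks: otherwise the s rows of block i2 and one more
   row would cross the vertical line at the end of block i2. *)
Lemma supported_preserves (p : 'S_(m1 + m2)) : supported X a0 s p ->
  #|[pred r | on_adiag s r (p r)]| = dboxes c i1 i3 ->
  ~~ [exists r : 'I_(m1 + m2), (r < m1)%N && (m1 <= p r)%N].
Proof.
move=> p_supp diagE; apply/existsP => -[r0 /andP [r0_lo pr0_hi]].
have lt2 := ltn_trans lt23 lt3.
have blk2_end : psum c i2.+1 = (a0 + m1 + s)%N by rewrite psumS // s2E psum_i2.
set blk2 := [pred r : 'I_(m1 + m2) | (psum c i2 <= a0 + r < psum c i2.+1)%N].
have blk2_off r : r \in blk2 -> ~~ on_adiag s r (p r).
  move=> r_blk; apply/negP => r_on.
  suff : (0 < diag_in_blk c a0 s p i2)%N by rewrite no_diag_in_middle.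
  by apply/card_gt0P; exists r; rewrite !inE r_on.
have cross : {subset [predU1 r0 & blk2] <=
    [pred r : 'I_(m1 + m2) | (r < psum c i2.+1 - a0)%N && (psum c i2.+1 - a0 <= s + p r)%N]}.
  move=> r; rewrite !inE => /orP [/eqP -> | r_blk] /=; first by rewrite blk2_end; lia.
  exact: (supported_leave_blk X_nil p_supp lt2 r_blk (blk2_off r r_blk)).
have card_blk2 : #|blk2| = s.
  rewrite card_blk_rows ?s2E ?psum_i2 ?leq_addr //.
  by rewrite -psum_i3 psum_mono.
have r0_out : r0 \notin blk2 by rewrite !inE psum_i2; lia.
have := leq_trans (subset_leq_card (introT subsetP cross))
                  (card_cross _ (supported_row_le X_nil p_supp)).
by rewrite cardU1 r0_out card_blk2 ltnn.
Qed.

Let K := Amx X (m1 + m2) a0 s.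
Let K0 := \matrix_(r, t) (if lower_left m1 r t then 0 else K r t).

Lemma K0_shape (r t : 'I_(m1 + m2)) : K0 r t =
  if on_adiag s r t && ~~ lower_left m1 r t then 'X
  else (if lower_left m1 r t then 0 else mxn X (a0 + r) (a0 + s + t))%:P.
Proof. by rewrite mxE /K (Amx_shape X_nil); case: (lower_left m1 r t); rewrite ?andbF ?andbT. Qed.

(* Zeroing the lower-left block does not change the a^d coefficient: the
   permutations meeting that block are exactly those leaving the first m1
   indices, and by supported_preserves they contribute nothing to it. *)
Lemma coef_truncate : (\det K)`_(dboxes c i1 i3) = (\det K0)`_(dboxes c i1 i3).
Proof.
rewrite (coef_det_shape (Amx_shape X_nil _ _)) (coef_det_shape K0_shape).
apply: eq_bigr => p _; congr (_ * _).
have [/existsP [r1 r1_ll]|/existsPn no_ll] :=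
  boolP [exists r : 'I_(m1 + m2), lower_left m1 r (p r)]; last first.
  have ll_off r : (on_adiag s r (p r) && ~~ lower_left m1 r (p r)) = on_adiag s r (p r).
    by rewrite (negbTE (no_ll r)) andbT.
  rewrite (eq_card ll_off) (eq_bigl _ _ (fun r => congr1 negb (ll_off r))).
  by congr (_ * _); apply: eq_bigr => r _; rewrite (negbTE (no_ll r)).
rewrite [X in _ = _ * X](bigD1 r1) /=; last by rewrite r1_ll andbF.
rewrite r1_ll mul0r mulr0; case: eqP => [diagE|_]; last by rewrite mul0r.
have [->|/supported_of_prod p_supp] := eqVneq (\prod_(r | ~~ on_adiag s r (p r))
  mxn X (a0 + r) (a0 + s + p r)) 0; first by rewrite mulr0.
have := supported_preserves p_supp diagE.
by rewrite perm_cross_segment; case/negP; apply/existsP; exists r1.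
Qed.

(* The truncated matrix is block upper triangular, with diagonal blocks the
   matrices of the pairs (i1, i2) and (i2, i3). *)
Lemma det_K0 : \det K0 = \det (Amx X m1 a0 s) * \det (Amx X m2 (psum c i2) s).
Proof.
rewrite -[K0]submxK (_ : dlsubmx K0 = 0) ?det_ublock; last first.
  by apply/matrixP => r t; rewrite !mxE /lower_left /= ltn_ord leq_addr.
congr (_ * _); congr (\det _); apply/matrixP => r t; rewrite !mxE /lower_left /=.
  by rewrite [(m1 <= r)%N]leqNgt ltn_ord.
rewrite ltnNge !leq_addr /= psum_i2.
by rewrite [(s + (m1 + t))%N]addnCA eqn_add2l !addnA [(a0 + s + m1)%N]addnAC.
Qed.

Lemma coef_Mpoly_mul :
  (Mpoly c i1 i3 X)`_(dboxes c i1 i3) =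
  (Mpoly c i1 i2 X)`_(dboxes c i1 i2) * (Mpoly c i2 i3 X)`_(dboxes c i2 i3).
Proof.
have lt2 := ltn_trans lt23 lt3.
have size13 : (psum c i3.+1 - psum c i1 - nth 0%N c i1 = m1 + m2)%N.
  by rewrite psumS // s3E psum_i3 /a0 -/s; lia.
have size12 : (psum c i2.+1 - psum c i1 - nth 0%N c i1 = m1)%N.
  by rewrite psumS // s2E psum_i2 /a0 -/s; lia.
have size23 : (psum c i3.+1 - psum c i2 - nth 0%N c i2 = m2)%N.
  by rewrite psumS // s3E s2E /m2 -/s; have := psum_mono c (ltnW lt23); lia.
rewrite !Mpoly_Amx size13 size12 size23 s2E -/s -/a0 coef_truncate det_K0 dboxes_split.
apply: coefM_lowest => j lt_j; first exact: low_coef X_nil lt2 (ltnW lt12) lt_j.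
by have := low_coef X_nil lt3 (ltnW lt23) lt_j; rewrite s2E.
Qed.

End ThreeColumns.

Lemma fCC_coef (R : fieldType) (n : nat) (c : seq nat) (i k : nat) (X : 'M[R]_n) :
  fCC c i k X = (Mpoly c i k X)`_(dboxes c i k).
Proof.
by rewrite /fCC -Pdiv.IdomainMonic.drop_poly_divp horner_coef0 coef_drop_poly add0n.
Qed.

Unset Implicit Arguments.
Set Strict Implicit.

(* Columns are indexed 0-based by positions in c: C = column i1,
   C'' = column i2, C' = column i3.  The scalar is lambda = 1. *)
Theorem lemma1p10 (R : realType) (n : nat) (c : seq nat) (i1 i2 i3 : nat) :
  (2 <= n)%N -> composition n c ->
  (i1 < i2)%N -> (i2 < i3)%N -> (i3 < size c)%N ->
  nth 0%N c i2 = nth 0%N c i1 -> nth 0%N c i3 = nth 0%N c i1 ->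
  (forall l, (i1 < l)%N -> (l < i3)%N -> l != i2 -> nth 0%N c l != nth 0%N c i1) ->
  exists lam : R[i], lam != 0 /\
    forall X : 'M[R[i]]_n, X \in nilrad c ->
      fCC c i1 i3 X = lam * fCC c i1 i2 X * fCC c i2 i3 X.
Proof.
move=> _ _ lt12 lt23 lt3 s2E s3E _; exists 1; split; first exact: oner_neq0.
move=> X X_nil; rewrite mul1r !fCC_coef.
exact: (coef_Mpoly_mul (R := R[i]) X_nil lt12 lt23 lt3 s2E s3E).
Qed.
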